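(* Let $G$ be a simple graph with $m \ge 1$ edges, let $\Delta_1 \ge \dots \ge \Delta_m$ be as defined below, and let $z$ be the unique real number with $1 \le z \le m$ satisfying \[ z(z-1) = \sum_{k=1}^{\lfloor z \rfloor} \Delta_k + (z - \lfloor z \rfloor)\,\Delta_{\lceil z \rceil}. \] Then $q(G) \le z + 1$, with equality when $G$ is regular.
   Context: $q(G)$ denotes the largest eigenvalue of the signless Laplacian $D + A$ of $G$. For each edge $uv$ of $G$ put $d_u + d_v - 2$ (the degree of $uv$ in the line graph of $G$), and let $\Delta_1 \ge \dots \ge \Delta_m$ be these $m$ numbers in non-increasing order. (The existence and uniqueness of $z$ is the Edwards–Elphick fact that for any graph on $N$ vertices with degrees $e_1\ge\dots\ge e_N$ the equation $y(y-1)=\sum_{k=1}^{\lfloor y\rfloor}e_k+(y-\lfloor y\rfloor)e_{\lceil y\rceil}$ has a unique solution in $[1,N]$, applied to the line graph.) *)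

From HB Require Import structures.
From mathcomp Require Import all_boot all_order all_algebra.
Set Implicit Arguments. Unset Strict Implicit. Unset Printing Implicit Defensive.
Import Order.TTheory GRing.Theory Num.Theory.

Definition simple_graph (n : nat) (e : rel 'I_n) : Prop :=
  (forall i j, e i j = e j i) /\ (forall i, ~~ e i i).

Definition deg (n : nat) (e : rel 'I_n) (i : 'I_n) : nat := #|[set j | e i j]|.

(* Edges, each unordered edge {i,j} represented once as (i,j) with i < j. *)
Definition edges (n : nat) (e : rel 'I_n) : {set 'I_n * 'I_n} :=
  [set p | e p.1 p.2 && (p.1 < p.2)%N].

Definition nedges (n : nat) (e : rel 'I_n) : nat := #|edges e|.

(* Edge degrees d_u + d_v - 2 sorted in non-increasing order:
   Delta_k = nth 0 (edge_degs e) k.-1  (1-based k). *)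
Definition edge_degs (n : nat) (e : rel 'I_n) : seq nat :=
  sort geq [seq (deg e p.1 + deg e p.2 - 2)%N | p <- enum (edges e)].

Definition regular (n : nat) (e : rel 'I_n) : Prop :=
  exists r, forall i, deg e i = r.

Local Open Scope ring_scope.

Definition signless_laplacian (R : rcfType) (n : nat) (e : rel 'I_n) : 'M[R]_n :=
  \matrix_(i, j) (if i == j then (deg e i)%:R else (e i j : nat)%:R).

Definition is_largest_eigenvalue (R : rcfType) (n : nat) (M : 'M[R]_n) (q : R) : Prop :=
  eigenvalue M q /\ (forall a, eigenvalue M a -> a <= q).

Definition is_floor (R : rcfType) (z : R) (k : nat) : Prop :=
  k%:R <= z < k.+1%:R.

Definition ceil_from_floor (R : rcfType) (z : R) (k : nat) : nat :=
  if z == k%:R then k else k.+1.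

Definition z_equation (R : rcfType) (D : seq nat) (z : R) : Prop :=
  exists k : nat, is_floor z k /\
    z * (z - 1) = \sum_(i < k) (nth 0%N D i)%:R
                  + (z - k%:R) * (nth 0%N D (ceil_from_floor z k).-1)%:R.

From HB Require Import structures.
From mathcomp Require Import all_boot all_order all_algebra.
From mathcomp Require Import ring lra zify.
Import Order.TTheory GRing.Theory Num.Theory.
Set Implicit Arguments. Unset Strict Implicit. Unset Printing Implicit Defensive.

(* If x is an eigenvector of Q = D + A for q, then y_uv = x_u + x_v is an
   eigenvector of the line graph for q - 2, since Q = B B^T and
   B^T B = 2 I + A(L(G)) for the incidence matrix B.  With w = |y| and
   s = sum w, the triangle inequality gives (q - 2) s <= sum_p Delta_p w_p and
   (q - 1) w_p <= s for every edge.  Bounding sum_p Delta_p w_p as a fractional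
   knapsack gives (q - 1)(q - 2) <= (q - 1) d + K with d = Delta_(k+1) and
   K = sum_(i <= k) (Delta_i - d), whereas z (z - 1) = z d + K; since
   t (t - 1) - t d is increasing beyond z, this forces q - 1 <= z.  For an
   r-regular graph the all-ones vector has eigenvalue 2r and the equation for
   z reduces to z = 2r - 1. *)

Lemma sorted_geq_nth (D : seq nat) i j :
  sorted geq D -> (i <= j)%N -> (nth 0 D j <= nth 0 D i)%N.
Proof.
move=> sD lij; have [ltjD|leDj] := ltnP j (size D); last by rewrite nth_default.
have geq_trans : transitive geq by move=> a b c /= ? ?; exact: (@leq_trans a).
apply: (sorted_leq_nth geq_trans (@leqnn) 0 sD) => //.
by rewrite inE (leq_ltn_trans lij ltjD).
Qed.

(* Only the first k terms of a non-increasing sequence exceed its k-th term. *)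
Lemma sum_sorted_excess (D : seq nat) k : sorted geq D ->
  (\sum_(x <- D) (x - nth 0 D k) = \sum_(i < k) (nth 0 D i - nth 0 D k))%N.
Proof.
move=> sD; set d := nth 0 D k; set m := maxn k (size D).
have vanish a b : (a <= b)%N -> (forall i, (a <= i)%N -> nth 0 D i <= d)%N ->
    (\sum_(0 <= i < b) (nth 0 D i - d) = \sum_(0 <= i < a) (nth 0 D i - d))%N.
  move=> lab small; rewrite (big_cat_nat (n := a)) //= [X in (_ + X)%N]big1_seq ?addn0 //.
  move=> i /andP[_]; rewrite mem_index_iota => /andP[ai _].
  by apply/eqP; rewrite subn_eq0 small.
rewrite (big_nth 0) -(vanish (size D) m) ?leq_maxr //; last first.
  by move=> i leDi; rewrite nth_default.
rewrite (vanish k m) ?leq_maxl ?big_mkord // => i.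
exact: sorted_geq_nth.
Qed.

Local Open Scope ring_scope.

Lemma natr_sum_sorted_excess (R : pzRingType) (D : seq nat) k : sorted geq D ->
  (\sum_(x <- D) (x - nth 0%N D k)%N)%:R
    = \sum_(i < k) (nth 0%N D i)%:R - k%:R * (nth 0%N D k)%:R :> R.
Proof.
move=> sD; rewrite sum_sorted_excess // natr_sum.
under eq_bigr => i _ do rewrite natrB ?(sorted_geq_nth sD) 1?ltnW //.
by rewrite sumrB sumr_const card_ord mulr_natl.
Qed.

Lemma z_equation_excess (R : rcfType) (D : seq nat) (z : R) : z_equation D z ->
  exists k, z * (z - 1)
    = z * (nth 0%N D k)%:R + (\sum_(i < k) (nth 0%N D i)%:R - k%:R * (nth 0%N D k)%:R).
Proof.
move=> [k [_ hz]]; exists k; rewrite hz /ceil_from_floor.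
by case: eqP => [->|_] /=; rewrite ?subrr ?mul0r; ring.
Qed.

Lemma z_equation_const (R : rcfType) (D : seq nat) (z : R) (delta : nat) :
  (forall i, (i < size D)%N -> nth 0%N D i = delta) -> 0 < z -> z <= (size D)%:R ->
  z_equation D z -> z = delta%:R + 1.
Proof.
move=> Dconst z_gt0 z_le [k [/andP[kz zk] hz]].
have k_le : (k <= size D)%N by rewrite -(ler_nat R) (le_trans kz).
have head_sum : \sum_(i < k) (nth 0%N D i)%:R = k%:R * delta%:R :> R.
  under eq_bigr => i _ do rewrite Dconst ?(leq_trans (ltn_ord i)) //.
  by rewrite sumr_const card_ord mulr_natl.
have tail : (z - k%:R) * (nth 0%N D (ceil_from_floor z k).-1)%:R = (z - k%:R) * delta%:R.
  rewrite /ceil_from_floor; case: eqP => [->|/eqP z_neq]; first by rewrite subrr !mul0r.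
  rewrite /= Dconst // -(ltr_nat R) (lt_le_trans _ z_le) // lt_def kz andbT.
  exact: z_neq.
have : z * (z - 1) = z * delta%:R by rewrite hz head_sum tail; ring.
move=> /(mulfI (lt0r_neq0 z_gt0)).
lra.
Qed.

Lemma le_quadratic_root (R : realFieldType) (t z d K : R) :
  0 <= K -> 0 < z -> z * (z - 1) = z * d + K -> t * (t - 1) <= t * d + K -> t <= z.
Proof.
move=> K_ge0 z_gt0 hz ht; rewrite leNgt; apply/negP => lt_zt.
have d_le : d <= z - 1 by rewrite -(ler_pM2l z_gt0); lra.
have : 0 < (t - z) * (t + z - 1 - d) by apply: mulr_gt0; lra.
nra.
Qed.

Lemma weighted_sum_le_excess (R : realDomainType) (I : finType) (A : {pred I})
    (D : I -> nat) (u : I -> R) (d : nat) (s : R) :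
  (forall p, p \in A -> 0 <= u p <= s) ->
  \sum_(p in A) (D p)%:R * u p
    <= d%:R * \sum_(p in A) u p + s * \sum_(p in A) (D p - d)%:R.
Proof.
move=> u_bound; rewrite !mulr_sumr -big_split /=; apply: ler_sum => p /u_bound.
case/andP=> u_ge0 u_le; have [le_Dd|lt_dD] := leqP (D p) d.
  by rewrite (eqP le_Dd) mulr0 addr0 ler_wpM2r // ler_nat.
have Dd_ge0 : 0 <= (D p)%:R - d%:R :> R by rewrite subr_ge0 ler_nat ltnW.
have := mulr_ge0 Dd_ge0 (_ : 0 <= s - u p); rewrite natrB 1?ltnW // subr_ge0.
by move/(_ u_le); nra.
Qed.

Lemma natr_deg (R : pzSemiRingType) (n : nat) (e : rel 'I_n) (u : 'I_n) :
  (deg e u)%:R = \sum_(i | e u i) (1 : R).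
Proof. by rewrite /deg -sum1_card natr_sum; apply: eq_bigl => i; rewrite inE. Qed.

Lemma deg_gt0 (n : nat) (e : rel 'I_n) u v : e u v -> (0 < deg e u)%N.
Proof. by move=> euv; rewrite /deg card_gt0; apply/set0Pn; exists v; rewrite inE. Qed.

Section AdjacentSums.

Variables (V : nmodType) (n : nat) (e : rel 'I_n).
Hypothesis e_sym : forall i j, e i j = e j i.

Lemma sum_adj_swap (F : 'I_n -> 'I_n -> V) :
  \sum_u \sum_(v | e u v) F u v = \sum_u \sum_(v | e u v) F v u.
Proof.
rewrite !pair_big_dep /=.
have swap_inj : injective (fun p : 'I_n * 'I_n => (p.2, p.1)) by move=> [? ?] [? ?] [-> ->].
by rewrite (reindex_inj swap_inj) /=; apply: eq_bigl => -[u v]; rewrite e_sym.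
Qed.

Hypothesis e_irr : forall i, ~~ e i i.

Lemma sum_adj_edges (F : 'I_n -> 'I_n -> V) : (forall u v, F u v = F v u) ->
  \sum_u \sum_(v | e u v) F u v = (\sum_(p in edges e) F p.1 p.2) *+ 2.
Proof.
move=> F_sym; rewrite pair_big_dep /= (bigID (fun p : 'I_n * 'I_n => (p.1 < p.2)%N)) /=.
rewrite mulr2n; congr (_ + _); first by apply: eq_bigl => p; rewrite inE.
have swap_inj : injective (fun p : 'I_n * 'I_n => (p.2, p.1)) by move=> [? ?] [? ?] [-> ->].
rewrite (reindex_inj swap_inj) /=; apply: eq_big => [[u v]|[u v] _] /=; last exact: F_sym.
rewrite inE /= e_sym; case euv: (e u v) => //=.
have : u != v by apply: contraTneq euv => ->; exact: e_irr.
by rewrite -leqNgt leq_eqVlt -val_eqE eq_sym; case: ltngtP.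
Qed.

End AdjacentSums.

Definition star_weight (R : numDomainType) (n : nat) (e : rel 'I_n) (x : 'I_n -> R) u :=
  \sum_(i | e u i) `|x u + x i|.

Section LineGraphEigenvector.

Variables (R : realDomainType) (n : nat) (e : rel 'I_n).
Hypotheses (e_sym : forall i j, e i j = e j i) (e_irr : forall i, ~~ e i i).
Variable x : 'I_n -> R.

Local Notation w u v := `|x u + x v|.
Local Notation W := (star_weight e x).

Lemma star_weight_pair_le u v : e u v -> (W u + W v - w u v) *+ 2 <= \sum_a W a.
Proof.
move=> euv; have uv : u != v by apply: contraTneq euv => ->; exact: e_irr.
have pair_le (F : 'I_n -> R) : (forall a, 0 <= F a) -> F u + F v <= \sum_a F a.
  move=> F_ge0; rewrite (bigD1 u) //= (bigD1 v) 1?eq_sym //= addrA lerDl.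
  exact: sumr_ge0.
(* phi a is the part of W a carried by the edges au and av. *)
pose phi : 'I_n -> R :=
  fun a => (if e a u then w a u else 0) + (if e a v then w a v else 0).
have phi_le a : phi a <= W a.
  rewrite /star_weight big_mkcond /=.
  by apply: (pair_le (fun i => if e a i then w a i else 0)) => i; case: ifP.
have sum_phi : \sum_a phi a = W u + W v.
  rewrite big_split /= /star_weight.
  by congr (_ + _); rewrite [RHS]big_mkcond; apply: eq_bigr => b _;
    rewrite e_sym; case: ifP; rewrite // addrC.
have phi_u : phi u = w u v by rewrite /phi (negbTE (e_irr u)) add0r euv.
have phi_v : phi v = w u v by rewrite /phi (negbTE (e_irr v)) addr0 e_sym euv addrC.
have : (W u - phi u) + (W v - phi v) <= \sum_a (W a - phi a).
  by apply: (pair_le (fun a => W a - phi a)) => a; rewrite subr_ge0.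
rewrite sumrB sum_phi phi_u phi_v; lra.
Qed.

Lemma sum_adj_star_weight :
  \sum_u \sum_(v | e u v) (W u + W v - w u v *+ 2)
    = \sum_u \sum_(v | e u v) (deg e u + deg e v - 2)%N%:R * w u v.
Proof.
have arc_W : \sum_u \sum_(v | e u v) W u = \sum_u \sum_(v | e u v) (deg e u)%:R * w u v.
  apply: eq_bigr => u _; rewrite -mulr_sumr natr_deg mulr_suml.
  by apply: eq_bigr => v _; rewrite mul1r.
have arc_deg : \sum_u \sum_(v | e u v) (deg e v)%:R * w u v
    = \sum_u \sum_(v | e u v) (deg e u)%:R * w u v.
  by rewrite (sum_adj_swap e_sym); do 2![apply: eq_bigr => ? _]; rewrite addrC.
under eq_bigr => u _ do rewrite sumrB big_split /=.
rewrite sumrB big_split /= [X in _ + X - _](sum_adj_swap e_sym) arc_W.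
under [RHS]eq_bigr => u _.
  under eq_bigr => v euv.
    have evu : e v u by rewrite e_sym.
    rewrite natrB ?natrD; last exact: leq_add (deg_gt0 euv) (deg_gt0 evu).
    rewrite mulrBl !mulrDl mul1r -mulr2n.
    over.
  rewrite sumrB big_split /=.
  over.
by rewrite sumrB big_split /= arc_deg.
Qed.

Variable q : R.
Hypothesis x_eigen : forall u, q * x u = \sum_(i | e u i) (x u + x i).

Lemma line_eigen_norm_le u v : e u v -> `|q - 2| * w u v <= W u + W v - w u v *+ 2.
Proof.
move=> euv; have evu : e v u by rewrite e_sym.
set S_u := \sum_(i | e u i && (i != v)) (x u + x i).
set S_v := \sum_(i | e v i && (i != u)) (x v + x i).
have eigen_u : q * x u = x u + x v + S_u by rewrite x_eigen (bigD1 v).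
have eigen_v : q * x v = x v + x u + S_v by rewrite x_eigen (bigD1 u).
have line_eigen : (q - 2) * (x u + x v) = S_u + S_v.
  by rewrite mulrBl mulrDr eigen_u eigen_v; ring.
have W_u : W u = w u v + \sum_(i | e u i && (i != v)) w u i.
  by rewrite /star_weight (bigD1 v).
have W_v : W v = w u v + \sum_(i | e v i && (i != u)) w v i.
  by rewrite /star_weight (bigD1 u) //= [x v + x u]addrC.
rewrite -normrM line_eigen W_u W_v.
have norm_u : `|S_u| <= \sum_(i | e u i && (i != v)) w u i by exact: ler_norm_sum.
have norm_v : `|S_v| <= \sum_(i | e v i && (i != u)) w v i by exact: ler_norm_sum.
have := ler_normD S_u S_v; lra.
Qed.

Local Notation s := (\sum_(p in edges e) w p.1 p.2).

Lemma sum_star_weight : \sum_a W a = s *+ 2.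
Proof.
by rewrite -(@sum_adj_edges R _ _ e_sym e_irr (fun u v => w u v)) // => u v; rewrite addrC.
Qed.

Lemma edge_sum_line_le :
  (q - 2) * s <= \sum_(p in edges e) (deg e p.1 + deg e p.2 - 2)%N%:R * w p.1 p.2.
Proof.
rewrite -(ler_pMn2r (n := 2)) // -mulrnAr -sum_star_weight.
rewrite -(@sum_adj_edges R _ _ e_sym e_irr
  (fun u v => (deg e u + deg e v - 2)%N%:R * w u v)); last first.
  by move=> u v; rewrite addnC addrC.
rewrite -sum_adj_star_weight mulr_sumr; apply: ler_sum => u _.
rewrite mulr_sumr; apply: ler_sum => v euv.
apply: le_trans (line_eigen_norm_le euv).
by rewrite ler_wpM2r // real_ler_norm ?num_real.
Qed.

Lemma edge_weight_le p : p \in edges e -> (q - 1) * w p.1 p.2 <= s.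
Proof.
rewrite inE => /andP[euv _].
have := line_eigen_norm_le euv; have := star_weight_pair_le euv.
rewrite sum_star_weight ler_pMn2r //.
have : 0 <= (`|q - 2| - (q - 2)) * w p.1 p.2.
  by rewrite mulr_ge0 // subr_ge0 real_ler_norm ?num_real.
rewrite mulr2n; lra.
Qed.

Lemma edge_weight_sum_eq0 : s = 0 -> forall u, q * x u = 0.
Proof.
move=> s0 u; have W_ge0 a : 0 <= W a by exact: sumr_ge0.
have /psumr_eq0P W0 : \sum_a W a = 0 by rewrite sum_star_weight s0 mul0rn.
apply/normr0_eq0/eqP; rewrite eq_le normr_ge0 andbT -(W0 (fun a _ => W_ge0 a) u) // x_eigen.
exact: ler_norm_sum.
Qed.

(* A fractional knapsack: the Delta-weighted sum is largest when the weight s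
   is packed onto the edges of largest Delta, at most s / (q - 1) per edge. *)
Lemma edge_sum_quadratic_le (d : nat) : 1 < q -> 0 < s ->
  (q - 1) * (q - 2)
    <= (q - 1) * d%:R + \sum_(p in edges e) (deg e p.1 + deg e p.2 - 2 - d)%N%:R.
Proof.
move=> q_gt1 s_gt0; set K := \sum_(p in edges e) _.
have q1_ge0 : 0 <= q - 1 by lra.
have excess_le : \sum_(p in edges e)
      (deg e p.1 + deg e p.2 - 2)%N%:R * ((q - 1) * w p.1 p.2)
    <= d%:R * \sum_(p in edges e) (q - 1) * w p.1 p.2 + s * K.
  apply: weighted_sum_le_excess => p p_edge.
  by rewrite mulr_ge0 ?normr_ge0 ?edge_weight_le.
rewrite -(ler_pM2r s_gt0) -mulrA; apply: le_trans (ler_wpM2l q1_ge0 edge_sum_line_le) _.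
rewrite mulr_sumr; under eq_bigr => p _ do rewrite mulrCA.
apply: le_trans excess_le _; rewrite -mulr_sumr.
by rewrite le_eqVlt; apply/orP; left; apply/eqP; ring.
Qed.

End LineGraphEigenvector.

Section SignlessLaplacian.

Variables (R : rcfType) (n : nat) (e : rel 'I_n).
Hypothesis e_simple : simple_graph e.

Lemma signless_laplacian_mulE (x : 'rV[R]_n) u :
  (x *m signless_laplacian R e) ord0 u = \sum_(i | e u i) (x ord0 u + x ord0 i).
Proof.
have [e_sym e_irr] := e_simple; rewrite mxE big_split /=.
have -> : \sum_(i | e u i) x ord0 u = (deg e u)%:R * x ord0 u.
  by rewrite natr_deg mulr_suml; apply: eq_bigr => *; rewrite mul1r.
rewrite (eq_bigr (fun j => (if j == u then (deg e u)%:R * x ord0 u else 0)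
                          + (if e u j then x ord0 j else 0))); last first.
  move=> j _; rewrite mxE; case: eqP => [->|/eqP nju].
    by rewrite (negbTE (e_irr u)) addr0 mulrC.
  by rewrite add0r e_sym; case: (e u j); rewrite ?mulr1 ?mulr0.
by rewrite big_split /= -!big_mkcond big_pred1_eq.
Qed.

Lemma signless_laplacian_regular r : (forall i, deg e i = r) ->
  const_mx 1 *m signless_laplacian R e = (r + r)%:R *: (const_mx 1 : 'rV[R]_n).
Proof.
move=> deg_r; apply/rowP => u; rewrite signless_laplacian_mulE !mxE mulr1.
rewrite -(deg_r u) natrD -mulr2n natr_deg -sumrMnl.
by apply: eq_bigr => i _; rewrite mxE.
Qed.

Lemma sorted_edge_degs : sorted geq (edge_degs e).
Proof. by apply: sort_sorted => a b; exact: leq_total. Qed.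

Lemma size_edge_degs : size (edge_degs e) = nedges e.
Proof. by rewrite size_sort size_map /nedges cardE. Qed.

Lemma nth_edge_degs_regular r : (forall i, deg e i = r) ->
  forall k, (k < size (edge_degs e))%N -> nth 0%N (edge_degs e) k = (r + r - 2)%N.
Proof.
move=> deg_r k /(mem_nth 0); rewrite mem_sort => /mapP[p _ ->].
by rewrite !deg_r.
Qed.

Lemma sum_edges_excess k :
  \sum_(p in edges e) (deg e p.1 + deg e p.2 - 2 - nth 0%N (edge_degs e) k)%N%:R
    = \sum_(i < k) (nth 0%N (edge_degs e) i)%:R
      - k%:R * (nth 0%N (edge_degs e) k)%:R :> R.
Proof.
rewrite -natr_sum_sorted_excess ?sorted_edge_degs // -natr_sum -big_enum /=.
by rewrite (perm_big _ (permEl (perm_sort geq _))) big_map.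
Qed.

Lemma signless_eigenvalue_le (x : 'rV[R]_n) (q z : R) :
  x *m signless_laplacian R e = q *: x -> x != 0 -> 0 < z ->
  z_equation (edge_degs e) z -> q <= z + 1.
Proof.
have [e_sym e_irr] := e_simple; move=> x_eigen x_nz z_gt0 /z_equation_excess[k z_eq].
have [q_le1|q_gt1] := lerP q 1; first lra.
pose X : 'I_n -> R := fun u => x ord0 u.
have X_eigen u : q * X u = \sum_(i | e u i) (X u + X i).
  by rewrite -signless_laplacian_mulE x_eigen !mxE.
have s_gt0 : 0 < \sum_(p in edges e) `|X p.1 + X p.2|.
  rewrite lt_def sumr_ge0 ?andbT //; apply: contra x_nz => /eqP s0.
  apply/eqP/rowP => u; have /eqP := edge_weight_sum_eq0 e_sym e_irr X_eigen s0 u.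
  by rewrite mulf_eq0 mxE => /orP[/eqP q0|/eqP]; first lra.
have := edge_sum_quadratic_le e_sym e_irr X_eigen (nth 0%N (edge_degs e) k) q_gt1 s_gt0.
have -> : q - 2 = q - 1 - 1 by ring.
move=> quadratic_le; suff : q - 1 <= z by lra.
apply: (le_quadratic_root _ z_gt0 _ quadratic_le); last by rewrite z_eq sum_edges_excess.
by apply: sumr_ge0 => *; exact: ler0n.
Qed.

End SignlessLaplacian.

Unset Implicit Arguments.

Theorem mainTheorem5 (R : rcfType) (n : nat) (e : rel 'I_n) (z q : R) :
  simple_graph e ->
  (1 <= nedges e)%N ->
  1 <= z -> z <= (nedges e)%:R ->
  z_equation (edge_degs e) z ->
  is_largest_eigenvalue (signless_laplacian R e) q ->
  q <= z + 1 /\ (regular e -> q = z + 1).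
Proof.
move=> e_simple m_gt0 z_ge1 z_le_m z_eq [q_eig q_max].
have z_gt0 : 0 < z by lra.
have [x x_eigen x_nz] := eigenvalueP q_eig.
have q_le := signless_eigenvalue_le e_simple x_eigen x_nz z_gt0 z_eq.
split=> // -[r deg_r].
have /set0Pn[p p_edge] : edges e != set0 by rewrite -card_gt0.
have r_gt0 : (0 < r)%N.
  by move: p_edge; rewrite inE -(deg_r p.1) => /andP[/deg_gt0].
have two_r_le : (r + r)%:R <= q.
  apply: q_max; apply/eigenvalueP; exists (const_mx 1).
    exact: signless_laplacian_regular.
  by apply/eqP => /rowP/(_ p.1)/eqP; rewrite !mxE oner_eq0.
have z_le_size : z <= (size (edge_degs e))%:R by rewrite size_edge_degs.
have z_val := z_equation_const (nth_edge_degs_regular deg_r) z_gt0 z_le_size z_eq.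
have two_le_rr : (2 <= r + r)%N by lia.
rewrite z_val natrB // natrD in q_le two_r_le *; lra.
Qed.
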